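(* There is a universal constant $C$ such that the following holds. Let $G=(V,E,m,w)$ be a weighted graph with an intrinsic metric $\rho$ such that all balls $B_R(x)$ are finite and the jump size $s=\sup_{x\sim y}\rho(x,y)$ is finite, and fix $x_0\in V$. For any ancient solution $u$ of $D_t u=\Delta u$ on $V\times\mathbb{Z}_-$ and any $R\in\mathbb{N}$ with $R\ge s$, $$R^2\sum_{\widetilde{Q}_R}\Gamma(u)+R^4\sum_{\widetilde{Q}_R}(D_t u)^2\le C\sum_{\widetilde{Q}_{9R}}u^2.$$
   Context: A weighted graph $G=(V,E,m,w)$ consists of a locally finite, simple, undirected, connected graph $(V,E)$, a symmetric edge weight $w:E\to(0,\infty)$ (extended by $w_{xy}=0$ if $x\not\sim y$), and a vertex weight $m:V\to(0,\infty)$. The Laplacian is $\Delta f(x)=\sum_{y\sim x}\frac{w_{xy}}{m_x}(f(y)-f(x))$. A (pseudo)metric $\rho$ on $V$ is intrinsic if $\sum_{y\sim x}w_{xy}\rho^2(x,y)\le m_x$ for all $x$; $B_R(x)=\{y:\rho(y,x)\le R\}$, $B_R:=B_R(x_0)$. $\mathbb{Z}_-=\mathbb{Z}\cap(-\infty,0]$; $D_t u(x,t)=u(x,t)-u(x,t-1)$; an ancient solution is $u:V\times\mathbb{Z}_-\to\mathbb{R}$ with $D_tu=\Delta u$ for all $(x,t)$. $\Gamma(f)(x)=\frac12\sum_{y}\frac{w_{xy}}{m_x}(f(y)-f(x))^2$, applied to $u(\cdot,t)$. $\widetilde{Q}_R=B_R\times([-R^2,0]\cap\mathbb{Z})$ and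 $\sum_{\widetilde{Q}_R}F:=\sum_{t=-R^2}^0\sum_{x\in B_R}F(x,t)m_x$. *)

From Stdlib Require Import Relation_Operators.
From mathcomp Require Import all_boot all_order all_algebra.
From mathcomp Require Import all_classical all_reals.
Set Implicit Arguments.
Unset Strict Implicit.
Unset Printing Implicit Defensive.
Import Order.TTheory GRing.Theory Num.Theory.
Local Open Scope classical_set_scope.
Local Open Scope ring_scope.

Section Defs.
Variables (R : realType) (V : choiceType).

(* x ~ y  iff  w x y > 0 (w is extended by 0 off the edge set) *)
Definition adjacent (w : V -> V -> R) (x y : V) : Prop := 0 < w x y.

Definition nbrs (w : V -> V -> R) (x : V) : set V := [set y | adjacent w x y].

Definition weighted_graph (m : V -> R) (w : V -> V -> R) : Prop :=
  (forall x y, w x y = w y x) /\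
  (forall x y, 0 <= w x y) /\
  (forall x, w x x = 0) /\
  (forall x, finite_set (nbrs w x)) /\
  (forall x, 0 < m x) /\
  (forall x y, clos_refl_trans V (adjacent w) x y).

Definition laplacian (m : V -> R) (w : V -> V -> R) (f : V -> R) (x : V) : R :=
  \sum_(y \in nbrs w x) (w x y / m x * (f y - f x)).

Definition Gamma (m : V -> R) (w : V -> V -> R) (f : V -> R) (x : V) : R :=
  2^-1 * \sum_(y \in nbrs w x) (w x y / m x * (f y - f x) ^+ 2).

Definition pseudometric (rho : V -> V -> R) : Prop :=
  [/\ (forall x, rho x x = 0),
      (forall x y, 0 <= rho x y),
      (forall x y, rho x y = rho y x) &
      (forall x y z, rho x z <= rho x y + rho y z)].

Definition intrinsic (m : V -> R) (w : V -> V -> R) (rho : V -> V -> R) : Prop :=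
  forall x, \sum_(y \in nbrs w x) (w x y * rho x y ^+ 2) <= m x.

Definition ball (rho : V -> V -> R) (x : V) (r : R) : set V :=
  [set y | rho y x <= r].

Definition jumps (w : V -> V -> R) (rho : V -> V -> R) : set R :=
  [set d | exists x y, adjacent w x y /\ d = rho x y].

Definition jump_size (w : V -> V -> R) (rho : V -> V -> R) : R :=
  sup (jumps w rho).

(* time derivative D_t u(x,t) = u(x,t) - u(x,t-1); times are integers,
   only t <= 0 is relevant *)
Definition Dt (u : V -> int -> R) (x : V) (t : int) : R := u x t - u x (t - 1).

Definition ancient (m : V -> R) (w : V -> V -> R) (u : V -> int -> R) : Prop :=
  forall x (t : int), (t <= 0)%R -> Dt u x t = laplacian m w (fun y => u y t) x.

(* sum over tilde Q_r = B_r(x0) x ([-r^2, 0] cap Z), weighted by m *)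
Definition sumQ (m : V -> R) (rho : V -> V -> R) (x0 : V) (r : nat)
    (F : V -> int -> R) : R :=
  \sum_(k < (r ^ 2).+1)
     \sum_(x \in ball rho x0 r%:R) (F x (- (k%:Z))%R * m x).

End Defs.

From mathcomp Require Import all_boot all_order all_algebra.
From mathcomp Require Import all_classical all_reals.
From mathcomp Require Import finmap ring lra zify.
Set Implicit Arguments.
Unset Strict Implicit.
Unset Printing Implicit Defensive.
Import Order.TTheory GRing.Theory Num.Theory.
Local Open Scope classical_set_scope.
Local Open Scope ring_scope.

(* Write a_k := u(., -k), so that a_k - a_(k+1) = Δ a_k is one backward Euler
   step.  Testing it against ψ² a_k and against φ² Δa_k, where ψ and φ are
   cutoffs of B_4r and B_2r with gradient at most 1/r (the metric is intrinsic),
   gives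
     Σ ψ² Γ(a_k) <= Σ ψ² (a_(k+1)² - a_k²) + 4 r⁻² Σ a_k²,
     Σ φ² (Δa_k)² <= (E(a_(k+1)) - E(a_k)) / 2 + 2 r⁻² Σ ψ² Γ(a_k),
   where E is the φ-localised Dirichlet energy, itself at most 2 Σ ψ² Γ.  Both
   right-hand sides telescope in k.  Averaging the starting time over r² steps
   bounds the leftover boundary terms by space-time sums of u² over Q_9r, which
   yields C = 20. *)

Section EdgeInequalities.
Variable R : realFieldType.

Lemma caccioppoli_edge_ineq (p q a b : R) :
  (p ^+ 2 + q ^+ 2) * (b - a) ^+ 2 / 4
  <= (q ^+ 2 * b - p ^+ 2 * a) * (b - a) + 2 * (q - p) ^+ 2 * (a ^+ 2 + b ^+ 2).
Proof.
set X := (q + p) * (b - a); set Y := (q - p) * (a + b).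
have -> : (q ^+ 2 * b - p ^+ 2 * a) * (b - a)
          = (p ^+ 2 + q ^+ 2) / 2 * (b - a) ^+ 2 + X * Y / 2 by rewrite /X /Y; field.
have XY : - (X * Y) / 2 <= X ^+ 2 / 16 + Y ^+ 2 by have := sqr_ge0 (X / 4 + Y); nra.
have X2 : X ^+ 2 <= 2 * (p ^+ 2 + q ^+ 2) * (b - a) ^+ 2.
  by rewrite /X; have := mulr_ge0 (sqr_ge0 (q - p)) (sqr_ge0 (b - a)); nra.
have Y2 : Y ^+ 2 <= 2 * (q - p) ^+ 2 * (a ^+ 2 + b ^+ 2).
  by rewrite /Y; have := mulr_ge0 (sqr_ge0 (q - p)) (sqr_ge0 (a - b)); nra.
nra.
Qed.

Lemma time_derivative_edge_ineq (p q vx vy g g' c : R) :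
  0 <= p -> 0 <= q -> 0 < c -> vy - vx = g - g' ->
  - ((q ^+ 2 * vy - p ^+ 2 * vx) * g)
  <= - (p * q * (g ^+ 2 - g' ^+ 2)) / 2
     + c / 2 * (q - p) ^+ 2 * (q ^+ 2 * vy ^+ 2 + p ^+ 2 * vx ^+ 2) + g ^+ 2 / c.
Proof.
move=> p0 q0 c0 dv.
set Y := q * vy + p * vx; set Z := (q - p) * Y.
have -> : (q ^+ 2 * vy - p ^+ 2 * vx) * g = p * q * (g - g') * g + Z * g.
  by rewrite /Z /Y -dv; ring.
have pq : - (p * q * (g - g') * g) <= - (p * q * (g ^+ 2 - g' ^+ 2)) / 2.
  by have := mulr_ge0 (mulr_ge0 p0 q0) (sqr_ge0 (g - g')); nra.
(* completing the square in [c Z / 2 + g] *)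
have Zg : - (Z * g) <= c / 4 * Z ^+ 2 + g ^+ 2 / c.
  have sq : 0 <= (c * Z / 2 + g) ^+ 2 / c by apply: divr_ge0; [exact: sqr_ge0|lra].
  have e : (c * Z / 2 + g) ^+ 2 / c = c / 4 * Z ^+ 2 + Z * g + g ^+ 2 / c.
    by field; lra.
  rewrite e in sq; lra.
have Y2 : Y ^+ 2 <= 2 * (q ^+ 2 * vy ^+ 2 + p ^+ 2 * vx ^+ 2).
  by rewrite /Y; have := sqr_ge0 (q * vy - p * vx); nra.
have cqp : 0 <= c / 4 * (q - p) ^+ 2 by apply: mulr_ge0; [lra|exact: sqr_ge0].
have eZ : c / 4 * Z ^+ 2 = c / 4 * (q - p) ^+ 2 * Y ^+ 2 by rewrite /Z; ring.
rewrite eZ in Zg; have := ler_wpM2l cqp Y2; nra.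
Qed.

End EdgeInequalities.

Section Clamp.
Variable R : realDomainType.

Definition clamp01 (t : R) : R := if t <= 0 then 0 else if t <= 1 then t else 1.

Lemma clamp01_ge0 t : 0 <= clamp01 t.
Proof.
by rewrite /clamp01; case: ifP => // /negbT; rewrite -ltNge; case: ifP => // _ /ltW.
Qed.

Lemma clamp01_le1 t : clamp01 t <= 1.
Proof. by rewrite /clamp01; case: ifP => // _; case: ifP. Qed.

Lemma clamp01_eq0 t : t <= 0 -> clamp01 t = 0.
Proof. by rewrite /clamp01 => ->. Qed.

Lemma clamp01_eq1 t : 1 <= t -> clamp01 t = 1.
Proof. by rewrite /clamp01; case: (lerP t 0); case: (lerP t 1); lra. Qed.

Lemma clamp01_sqr_sub_le s t : (clamp01 s - clamp01 t) ^+ 2 <= (s - t) ^+ 2.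
Proof.
wlog ts : s t / t <= s.
  move=> hw; case: (lerP t s) => [|/ltW st]; first exact: hw.
  by have := hw t s st; rewrite -[clamp01 t - _]opprB -[t - s]opprB !sqrrN.
rewrite /clamp01.
by case: (lerP s 0); case: (lerP t 0); case: (lerP s 1); case: (lerP t 1); nra.
Qed.

End Clamp.

Section PairSum.
Variables (R : numDomainType) (V : Type) (w : V -> V -> R) (S : seq V).

Definition pair_sum (F : V -> V -> R) : R :=
  \sum_(x <- S) \sum_(y <- S) w x y * F x y.

Lemma eq_pair_sum F G : (forall x y, F x y = G x y) -> pair_sum F = pair_sum G.
Proof. by move=> FG; apply: eq_bigr => x _; apply: eq_bigr => y _; rewrite FG. Qed.

Lemma pair_sumD F G : pair_sum (fun x y => F x y + G x y) = pair_sum F + pair_sum G.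
Proof.
rewrite /pair_sum -big_split; apply: eq_bigr => x _; rewrite -big_split.
by apply: eq_bigr => y _; rewrite mulrDr.
Qed.

Lemma pair_sumZ c F : pair_sum (fun x y => c * F x y) = c * pair_sum F.
Proof.
rewrite /pair_sum mulr_sumr; apply: eq_bigr => x _; rewrite mulr_sumr.
by apply: eq_bigr => y _; rewrite mulrCA.
Qed.

Lemma pair_sum_rowZ (f : V -> R) F :
  pair_sum (fun x y => f x * F x y) = \sum_(x <- S) f x * \sum_(y <- S) w x y * F x y.
Proof.
by apply: eq_bigr => x _; rewrite mulr_sumr; apply: eq_bigr => y _; rewrite mulrCA.
Qed.

Lemma ler_pair_sum F G :
  (forall x y, w x y * F x y <= w x y * G x y) -> pair_sum F <= pair_sum G.
Proof. by move=> FG; apply: ler_sum => x _; apply: ler_sum => y _; exact: FG. Qed.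

Lemma pair_sum_ge0 F : (forall x y, 0 <= w x y) -> (forall x y, 0 <= F x y) ->
  0 <= pair_sum F.
Proof.
by move=> w0 F0; apply: sumr_ge0 => x _; apply: sumr_ge0 => y _; exact: mulr_ge0.
Qed.

Hypothesis w_sym : forall x y, w x y = w y x.

Lemma pair_sum_swap F : pair_sum F = pair_sum (fun x y => F y x).
Proof.
rewrite /pair_sum exchange_big /=; apply: eq_bigr => x _; apply: eq_bigr => y _.
by rewrite w_sym.
Qed.

Lemma pair_sum_symmetrize F : pair_sum (fun x y => F x y + F y x) = 2 * pair_sum F.
Proof. by rewrite pair_sumD -(pair_sum_swap F) mulr_natl mulr2n. Qed.

End PairSum.

Section NonnegativeSequences.
Variable R : numDomainType.

Lemma ler_sum_prefix (f : nat -> R) n n' : (forall k, 0 <= f k) -> (n <= n')%N ->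
  \sum_(0 <= k < n) f k <= \sum_(0 <= k < n') f k.
Proof.
move=> f0 nn'; rewrite [leRHS](big_cat_nat (leq0n n) nn') /= lerDl.
by apply: sumr_ge0 => k _.
Qed.

Lemma sum_telescope_le (f p q : nat -> R) n :
  (forall k, f k <= p k.+1 - p k + q k) ->
  \sum_(0 <= k < n) f k <= p n - p 0%N + \sum_(0 <= k < n) q k.
Proof.
move=> fpq; apply: le_trans (ler_sum_nat (fun k _ => fpq k)) _.
by rewrite big_split /= telescope_sumr.
Qed.

(* Prefix sums increase, so [N] copies of the one at [M] are dominated by
   those at [M], ..., [M + N - 1]. *)
Lemma prefix_sum_average (f g : nat -> R) (c : R) (M N : nat) :
  (forall k, 0 <= f k) -> (forall k, 0 <= g k) ->
  (forall K, (K < M + N)%N -> \sum_(0 <= k < K.+1) f k <= g K.+1 + c) ->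
  N%:R * \sum_(0 <= k < M.+1) f k <= \sum_(0 <= k < (M + N).+1) g k + N%:R * c.
Proof.
move=> f0 g0 fg.
have shift : \sum_(0 <= i < N) g (i + M.+1)%N <= \sum_(0 <= k < (M + N).+1) g k.
  have -> : \sum_(0 <= i < N) g (i + M.+1)%N = \sum_(M.+1 <= k < M.+1 + N) g k.
    by rewrite -{2}(add0n M.+1) big_addn addKn.
  rewrite -addSn [leRHS](big_cat_nat (leq0n M.+1) (leq_addr N M.+1)) /= lerDr.
  exact: sumr_ge0.
have mono i : \sum_(0 <= k < M.+1) f k <= \sum_(0 <= k < (M + i).+1) f k.
  by apply: ler_sum_prefix; rewrite // ltnS leq_addr.
apply: le_trans (_ : \sum_(0 <= i < N) (g (i + M.+1)%N + c) <= _); last first.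
  by rewrite big_split /= sumr_const_nat subn0 mulr_natl lerD2r.
rewrite mulr_natl -[N in _ *+ N]subn0 -sumr_const_nat.
apply: ler_sum_nat => i /andP[_ iN].
have -> : (i + M.+1 = (M + i).+1)%N by rewrite addnS addnC.
by apply: le_trans (mono i) (fg _ _); rewrite ltn_add2l.
Qed.

End NonnegativeSequences.

Section Energy.
Variables (R : realType) (V : choiceType) (m : V -> R) (w : V -> V -> R)
  (rho : V -> V -> R) (x0 : V) (r : R).
Hypotheses (graph_mw : weighted_graph m w) (pseudometric_rho : pseudometric rho)
  (intrinsic_rho : intrinsic m w rho)
  (finite_ball : forall (x : V) (s : R), finite_set (ball rho x s))
  (jumps_ub : has_ubound (jumps w rho)) (r_gt0 : 0 < r)
  (jump_size_le : jump_size w rho <= r).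

Lemma w_sym x y : w x y = w y x. Proof. by case: graph_mw. Qed.
Lemma w_ge0 x y : 0 <= w x y. Proof. by case: graph_mw => _ []. Qed.
Lemma m_gt0 x : 0 < m x. Proof. by case: graph_mw => _ [_ [_ [_ []]]]. Qed.
Lemma m_ge0 x : 0 <= m x. Proof. exact: ltW (m_gt0 x). Qed.

Lemma w_eq0 x y : ~ adjacent w x y -> w x y = 0.
Proof.
by move=> /negP; rewrite /adjacent -leNgt => w_le0; apply/eqP; rewrite eq_le w_le0 w_ge0.
Qed.

Lemma rho_sym x y : rho x y = rho y x. Proof. by case: pseudometric_rho. Qed.
Lemma rho_ge0 x y : 0 <= rho x y. Proof. by case: pseudometric_rho. Qed.
Lemma rho_triangle x y z : rho x z <= rho x y + rho y z.
Proof. by case: pseudometric_rho. Qed.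

Lemma rho_adjacent_le x y : adjacent w x y -> rho x y <= r.
Proof. by move=> xy; apply: le_trans jump_size_le; apply: ub_le_sup => //; exists x, y. Qed.

Lemma rho_center_adjacent x y : adjacent w x y ->
  rho y x0 <= rho x x0 + r /\ rho x x0 <= rho y x0 + r.
Proof.
move=> xy; have := rho_adjacent_le xy; have := rho_triangle y x x0.
by have := rho_triangle x y x0; rewrite (rho_sym y x); lra.
Qed.

Lemma Gamma_ge0 f x : 0 <= Gamma m w f x.
Proof.
apply: mulr_ge0; first by rewrite invr_ge0.
apply: fsumr_ge0 => y _; apply: mulr_ge0; last exact: sqr_ge0.
by apply: divr_ge0; [exact: w_ge0 | exact: m_ge0 x].
Qed.

(* All sums live on the finite window [B_{9r}]; the points of [B_{8r}] have
   all their neighbours in it, and every cutoff below vanishes outside [B_{8r}]. *)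
Definition window := fset_set (ball rho x0 (9 * r)).
Definition inner (x : V) : Prop := rho x x0 <= 8 * r.

Lemma mem_window x : (x \in window) = (rho x x0 <= 9 * r).
Proof. by rewrite /window in_fset_set //; apply/idP/idP; rewrite in_setE. Qed.

Lemma adjacent_inner_window x y : inner x -> adjacent w x y -> y \in window.
Proof.
move=> ix xy; rewrite mem_window; have := rho_center_adjacent xy.
by move: ix; rewrite /inner; lra.
Qed.

Lemma fsbig_nbrs_window x (F : V -> R) : inner x -> (forall y, w x y = 0 -> F y = 0) ->
  \sum_(y \in nbrs w x) F y = \sum_(y <- window) F y.
Proof.
move=> ix F0; rewrite (fsbig_fwiden window) ?fset_uniq //.
- by move=> y; exact: adjacent_inner_window.
- by move=> y [_ /w_eq0 /F0].
Qed.

Lemma laplacian_window f x : inner x ->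
  m x * laplacian m w f x = \sum_(y <- window) w x y * (f y - f x).
Proof.
move=> ix; rewrite /laplacian (fsbig_nbrs_window ix); last by move=> y ->; rewrite !mul0r.
rewrite mulr_sumr; apply: eq_bigr => y _; by rewrite mulrCA mulrA divfK // lt0r_neq0 ?m_gt0.
Qed.

Lemma Gamma_window f x : inner x ->
  Gamma m w f x * m x = 2^-1 * \sum_(y <- window) w x y * (f y - f x) ^+ 2.
Proof.
move=> ix; rewrite /Gamma (fsbig_nbrs_window ix); last by move=> y ->; rewrite !mul0r.
rewrite -mulrA mulr_suml; congr (_ * _); apply: eq_bigr => y _.
by rewrite mulrAC divfK // lt0r_neq0 ?m_gt0.
Qed.

Lemma intrinsic_window x : inner x -> \sum_(y <- window) w x y * rho x y ^+ 2 <= m x.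
Proof.
by move=> ix; rewrite -(fsbig_nbrs_window ix) ?intrinsic_rho // => y ->; rewrite mul0r.
Qed.

Local Notation D := (pair_sum w window).

Lemma green_window h f : (forall x, ~ inner x -> h x = 0) ->
  \sum_(x <- window) h x * (m x * laplacian m w f x)
  = - 2^-1 * D (fun x y => (h y - h x) * (f y - f x)).
Proof.
move=> h0.
have hL : \sum_(x <- window) h x * (m x * laplacian m w f x)
          = D (fun x y => h x * (f y - f x)).
  rewrite pair_sum_rowZ; apply: eq_bigr => x _.
  by case: (pselect (inner x)) => ix; [rewrite laplacian_window | rewrite h0 // !mul0r].
have -> : D (fun x y => (h y - h x) * (f y - f x))
          = -1 * D (fun x y => h x * (f y - f x) + h y * (f x - f y)).
  by rewrite -pair_sumZ; apply: eq_pair_sum => x y; ring.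
rewrite hL (pair_sum_symmetrize _ w_sym (fun x y => h x * (f y - f x))).
by field.
Qed.

Lemma pair_sum_Gamma c f : (forall x, ~ inner x -> c x = 0) ->
  D (fun x y => c x * (f y - f x) ^+ 2)
  = 2 * \sum_(x <- window) c x * (Gamma m w f x * m x).
Proof.
move=> c0; rewrite pair_sum_rowZ mulr_sumr; apply: eq_bigr => x _.
case: (pselect (inner x)) => ix; last by rewrite c0 // !mul0r mulr0.
by rewrite Gamma_window //; field.
Qed.

Definition cutoff (b : R) (x : V) : R := clamp01 ((b - rho x x0) / r).

Lemma cutoff_ge0 b x : 0 <= cutoff b x. Proof. exact: clamp01_ge0. Qed.
Lemma cutoff_le1 b x : cutoff b x <= 1. Proof. exact: clamp01_le1. Qed.

Lemma cutoff_eq1 b x : rho x x0 <= b - r -> cutoff b x = 1.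
Proof. by move=> xb; apply: clamp01_eq1; rewrite ler_pdivlMr //; lra. Qed.

Lemma cutoff_eq0 b x : b <= rho x x0 -> cutoff b x = 0.
Proof. move=> xb; apply: clamp01_eq0; rewrite pmulr_lle0 ?invr_gt0 //; lra. Qed.

Lemma cutoff_sqr_sub_le b x y : (cutoff b y - cutoff b x) ^+ 2 <= rho x y ^+ 2 / r ^+ 2.
Proof.
apply: le_trans (clamp01_sqr_sub_le _ _) _.
have -> : (b - rho y x0) / r - (b - rho x x0) / r = (rho x x0 - rho y x0) / r.
  by field; rewrite lt0r_neq0.
rewrite expr_div_n ler_pM2r ?invr_gt0 ?exprn_gt0 //.
have := rho_triangle x y x0; have := rho_triangle y x x0; rewrite (rho_sym y x).
by have := rho_ge0 x y; nra.
Qed.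

Section Cutoff.
Variable b : R.
Hypothesis b_le : b <= 4 * r.

Lemma cutoff_outer x : ~ inner x -> cutoff b x = 0.
Proof. move=> /negP; rewrite /inner -ltNge => ix; apply: cutoff_eq0.
by have := r_gt0; have := b_le; lra. Qed.

Lemma cutoff_outer_adjacent x y : ~ inner x -> w x y * cutoff b y = 0.
Proof.
move=> /negP; rewrite /inner -ltNge => ix.
case: (pselect (adjacent w x y)) => xy; last by rewrite w_eq0 // mul0r.
rewrite cutoff_eq0 ?mulr0 //; have := rho_center_adjacent xy.
by have := r_gt0; have := b_le; lra.
Qed.

Lemma cutoff_gradient_le x :
  \sum_(y <- window) w x y * (cutoff b y - cutoff b x) ^+ 2 <= m x / r ^+ 2.
Proof.
case: (pselect (inner x)) => ix.
  apply: le_trans (_ : \sum_(y <- window) w x y * rho x y ^+ 2 / r ^+ 2 <= _).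
    by apply: ler_sum => y _; rewrite -mulrA ler_wpM2l ?w_ge0 ?cutoff_sqr_sub_le.
  rewrite -mulr_suml ler_wpM2r ?intrinsic_window //.
  by rewrite invr_ge0 exprn_ge0 // ltW.
rewrite big1; first by apply: divr_ge0; [exact: m_ge0 x | exact: exprn_ge0 (ltW r_gt0)].
move=> y _; rewrite (cutoff_outer ix) subr0 expr2 mulrA.
by rewrite (cutoff_outer_adjacent y ix) mul0r.
Qed.

Lemma pair_sum_cutoff_le (f : V -> R) : (forall x, 0 <= f x) ->
  D (fun x y => f x * (cutoff b y - cutoff b x) ^+ 2)
  <= r ^- 2 * \sum_(x <- window) f x * m x.
Proof.
move=> f0; rewrite pair_sum_rowZ mulr_sumr; apply: ler_sum => x _.
by rewrite mulrCA ler_wpM2l // mulrC cutoff_gradient_le.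
Qed.

End Cutoff.

Definition phi : V -> R := cutoff (2 * r).
Definition psi : V -> R := cutoff (4 * r).

Lemma two_r_le_four_r : 2 * r <= 4 * r. Proof. by have := r_gt0; lra. Qed.

Lemma phi_outer x : ~ inner x -> phi x = 0.
Proof. exact: (cutoff_outer two_r_le_four_r). Qed.
Lemma psi_outer x : ~ inner x -> psi x = 0. Proof. exact: (cutoff_outer (lexx _)). Qed.

Lemma phi_mul_le_psi x y : phi x * phi y <= psi x ^+ 2.
Proof.
case: (lerP (rho x x0) (3 * r)) => x3; last first.
  by rewrite /phi cutoff_eq0 ?mul0r ?sqr_ge0 //; have := r_gt0; lra.
rewrite /psi cutoff_eq1 ?expr1n; last by lra.
by rewrite -(mulr1 1) ler_pM ?cutoff_ge0 ?cutoff_le1.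
Qed.

Lemma phi_adjacent_eq0 x y : adjacent w x y -> psi x != 1 -> phi x = 0 /\ phi y = 0.
Proof.
move=> xy; case: (lerP (rho x x0) (3 * r)) => x3.
  by rewrite /psi cutoff_eq1 ?eqxx //; lra.
have := rho_center_adjacent xy; have := r_gt0 => *.
by split; apply: cutoff_eq0; lra.
Qed.

Lemma pair_sum_product_rule_le (chi f : V -> R) :
  D (fun x y => chi x ^+ 2 * (f y - f x) ^+ 2)
  <= 2 * D (fun x y => (chi y ^+ 2 * f y - chi x ^+ 2 * f x) * (f y - f x))
     + 8 * D (fun x y => f x ^+ 2 * (chi y - chi x) ^+ 2).
Proof.
set P := D (fun x y => chi x ^+ 2 * (f y - f x) ^+ 2).
have edge : D (fun x y => (chi x ^+ 2 + chi y ^+ 2) * (f y - f x) ^+ 2 / 4)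
    <= D (fun x y => (chi y ^+ 2 * f y - chi x ^+ 2 * f x) * (f y - f x))
       + D (fun x y => 2 * (chi y - chi x) ^+ 2 * (f x ^+ 2 + f y ^+ 2)).
  rewrite -pair_sumD; apply: ler_pair_sum => x y.
  by rewrite ler_wpM2l ?w_ge0 ?caccioppoli_edge_ineq.
have PE : D (fun x y => (chi x ^+ 2 + chi y ^+ 2) * (f y - f x) ^+ 2 / 4) = 2^-1 * P.
  have -> : D (fun x y => (chi x ^+ 2 + chi y ^+ 2) * (f y - f x) ^+ 2 / 4)
      = D (fun x y => 4^-1 * (chi x ^+ 2 * (f y - f x) ^+ 2
                              + chi y ^+ 2 * (f x - f y) ^+ 2)).
    by apply: eq_pair_sum => x y; ring.
  rewrite pair_sumZ.
  rewrite (pair_sum_symmetrize _ w_sym (fun x y => chi x ^+ 2 * (f y - f x) ^+ 2)).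
  by rewrite -/P; field.
have cutE : D (fun x y => 2 * (chi y - chi x) ^+ 2 * (f x ^+ 2 + f y ^+ 2))
    = 4 * D (fun x y => f x ^+ 2 * (chi y - chi x) ^+ 2).
  have -> : D (fun x y => 2 * (chi y - chi x) ^+ 2 * (f x ^+ 2 + f y ^+ 2))
      = D (fun x y => 2 * (f x ^+ 2 * (chi y - chi x) ^+ 2
                           + f y ^+ 2 * (chi x - chi y) ^+ 2)).
    by apply: eq_pair_sum => x y; ring.
  rewrite pair_sumZ.
  rewrite (pair_sum_symmetrize _ w_sym (fun x y => f x ^+ 2 * (chi y - chi x) ^+ 2)).
  by ring.
by move: edge; rewrite PE cutE; lra.
Qed.

Lemma caccioppoli (a a' : V -> R) : (forall x, a x - a' x = laplacian m w a x) ->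
  \sum_(x <- window) psi x ^+ 2 * (Gamma m w a x * m x)
  <= \sum_(x <- window) psi x ^+ 2 * (a' x ^+ 2 - a x ^+ 2) * m x
     + 4 * (r ^- 2 * \sum_(x <- window) a x ^+ 2 * m x).
Proof.
move=> step.
have psi0 x : ~ inner x -> psi x ^+ 2 = 0 by move=> ix; rewrite psi_outer // expr0n.
have -> : \sum_(x <- window) psi x ^+ 2 * (Gamma m w a x * m x)
    = 2^-1 * D (fun x y => psi x ^+ 2 * (a y - a x) ^+ 2).
  by rewrite pair_sum_Gamma //; field.
have green : D (fun x y => (psi y ^+ 2 * a y - psi x ^+ 2 * a x) * (a y - a x))
    = -2 * \sum_(x <- window) psi x ^+ 2 * a x * (a x - a' x) * m x.
  have -> : \sum_(x <- window) psi x ^+ 2 * a x * (a x - a' x) * m x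
      = \sum_(x <- window) psi x ^+ 2 * a x * (m x * laplacian m w a x).
    by apply: eq_bigr => x _; rewrite step; ring.
  rewrite (@green_window (fun x => psi x ^+ 2 * a x)) => [|x /psi0 ->]; first by field.
  by rewrite mul0r.
have step_le : -2 * \sum_(x <- window) psi x ^+ 2 * a x * (a x - a' x) * m x
    <= \sum_(x <- window) psi x ^+ 2 * (a' x ^+ 2 - a x ^+ 2) * m x.
  rewrite mulr_sumr; apply: ler_sum => x _; rewrite -subr_ge0.
  have -> : psi x ^+ 2 * (a' x ^+ 2 - a x ^+ 2) * m x
            - -2 * (psi x ^+ 2 * a x * (a x - a' x) * m x)
      = psi x ^+ 2 * m x * (a x - a' x) ^+ 2 by ring.
  exact: mulr_ge0 (mulr_ge0 (sqr_ge0 _) (m_ge0 x)) (sqr_ge0 _).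
have := pair_sum_cutoff_le (lexx (4 * r)) (fun x => sqr_ge0 (a x)).
have := pair_sum_product_rule_le psi a.
by rewrite green; move: step_le; lra.
Qed.

Definition local_dirichlet (f : V -> R) : R :=
  D (fun x y => phi x * phi y * (f y - f x) ^+ 2).

Lemma local_dirichlet_ge0 f : 0 <= local_dirichlet f.
Proof.
apply: pair_sum_ge0 => [|x y]; first exact: w_ge0.
exact: mulr_ge0 (mulr_ge0 (cutoff_ge0 _ _) (cutoff_ge0 _ _)) (sqr_ge0 _).
Qed.

Lemma local_dirichlet_le f :
  local_dirichlet f <= 2 * \sum_(x <- window) psi x ^+ 2 * (Gamma m w f x * m x).
Proof.
rewrite -pair_sum_Gamma => [|x /psi_outer ->]; last by rewrite expr0n.
apply: ler_pair_sum => x y; rewrite ler_wpM2l ?w_ge0 //.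
by rewrite ler_wpM2r ?sqr_ge0 ?phi_mul_le_psi.
Qed.

Lemma time_derivative_edge_le (a a' : V -> R) x y :
  w x y * (-1 * ((phi y ^+ 2 * (a y - a' y) - phi x ^+ 2 * (a x - a' x)) * (a y - a x)))
  <= w x y * (- 2^-1 * (phi x * phi y * (a y - a x) ^+ 2)
       + (2^-1 * (phi x * phi y * (a' y - a' x) ^+ 2)
       + (r ^+ 2 / 2 * ((phi y - phi x) ^+ 2
                        * (phi y ^+ 2 * (a y - a' y) ^+ 2 + phi x ^+ 2 * (a x - a' x) ^+ 2))
          + r ^- 2 * (psi x ^+ 2 * (a y - a x) ^+ 2)))).
Proof.
have c_gt0 : 0 < r ^+ 2 by exact: exprn_gt0.
case: (pselect (adjacent w x y)) => xy; last by rewrite w_eq0 // !mul0r.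
rewrite ler_wpM2l ?w_ge0 //.
have px : 0 <= phi x by exact: cutoff_ge0.
have py : 0 <= phi y by exact: cutoff_ge0.
case: (eqVneq (psi x) 1) => [-> | psi_x].
  have dv : (a y - a' y) - (a x - a' x) = (a y - a x) - (a' y - a' x) by ring.
  have := time_derivative_edge_ineq px py c_gt0 dv.
  by rewrite expr1n mul1r; lra.
have : 0 <= r ^- 2 * (psi x ^+ 2 * (a y - a x) ^+ 2).
  by apply: mulr_ge0; [rewrite invr_ge0 ltW | rewrite mulr_ge0 ?sqr_ge0].
by have [-> ->] := phi_adjacent_eq0 xy psi_x; lra.
Qed.

Lemma time_derivative_energy (a a' : V -> R) : (forall x, a x - a' x = laplacian m w a x) ->
  \sum_(x <- window) phi x ^+ 2 * ((a x - a' x) ^+ 2 * m x)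
  <= (local_dirichlet a' - local_dirichlet a) / 2
     + 2 * (r ^- 2 * \sum_(x <- window) psi x ^+ 2 * (Gamma m w a x * m x)).
Proof.
move=> step; set c := r ^+ 2; set v := fun x => a x - a' x.
have c_gt0 : 0 < c by exact: exprn_gt0.
set L := \sum_(x <- window) _.
set X := fun x y => (phi y ^+ 2 * v y - phi x ^+ 2 * v x) * (a y - a x).
set K := fun x y => (phi y - phi x) ^+ 2 * (phi y ^+ 2 * v y ^+ 2 + phi x ^+ 2 * v x ^+ 2).
have LX : L = - 2^-1 * D X.
  rewrite -(@green_window (fun x => phi x ^+ 2 * v x)) => [|x /phi_outer ->]; last first.
    by rewrite expr0n mul0r.
  by apply: eq_bigr => x _; rewrite -step /v; ring.
have KL : c / 2 * D K <= L.
  have -> : D K = 2 * D (fun x y => phi x ^+ 2 * v x ^+ 2 * (phi y - phi x) ^+ 2).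
    by rewrite -(pair_sum_symmetrize _ w_sym); apply: eq_pair_sum => x y; rewrite /K; ring.
  have := pair_sum_cutoff_le two_r_le_four_r
    (fun x => mulr_ge0 (sqr_ge0 (phi x)) (sqr_ge0 (v x))).
  have -> : \sum_(x <- window) phi x ^+ 2 * v x ^+ 2 * m x = L.
    by apply: eq_bigr => x _; rewrite mulrA.
  by rewrite mulrA divfK ?pnatr_eq0 // -/c -ler_pdivlMl // mulrC.
have := ler_pair_sum window (time_derivative_edge_le a a').
rewrite !pair_sumD !pair_sumZ -/c -/(D X) -/(D K) pair_sum_Gamma => [|x /psi_outer ->].
  by move: KL LX; rewrite /local_dirichlet; lra.
by rewrite expr0n.
Qed.

Lemma ball_sum_le_window (c F : V -> R) :
  (forall x, rho x x0 <= r -> c x = 1) -> (forall x, 0 <= c x) -> (forall x, 0 <= F x) ->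
  \sum_(x \in ball rho x0 r) F x <= \sum_(x <- window) c x * F x.
Proof.
move=> c1 c0 F0; rewrite /window -fsbig_finite // (fsbigID (ball rho x0 r)) //.
rewrite setIidr => [|x]; last by rewrite /ball /=; have := r_gt0; lra.
have -> : \sum_(x \in ball rho x0 r) c x * F x = \sum_(x \in ball rho x0 r) F x.
  by apply: eq_fsbigr => x /[!in_setE] /c1 ->; rewrite mul1r.
by rewrite lerDl fsumr_ge0 // => x _; exact: mulr_ge0.
Qed.

Section Ancient.
Variables (u : V -> int -> R) (N : nat).
Hypotheses (ancient_u : ancient m w u) (N_eq : N%:R = r ^+ 2).

Let a (k : nat) : V -> R := fun x => u x (- k%:Z).

Lemma Dt_a k x : Dt u x (- k%:Z) = a k x - a k.+1 x.
Proof. by rewrite /Dt /a -addn1 PoszD opprD. Qed.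

Lemma a_step k x : a k x - a k.+1 x = laplacian m w (a k) x.
Proof. by rewrite -Dt_a ancient_u // oppr_le0. Qed.

Definition mass k := \sum_(x <- window) a k x ^+ 2 * m x.
Definition local_mass k := \sum_(x <- window) psi x ^+ 2 * a k x ^+ 2 * m x.
Definition grad_energy k := \sum_(x <- window) psi x ^+ 2 * (Gamma m w (a k) x * m x).
Definition dt_energy k := \sum_(x <- window) phi x ^+ 2 * ((a k x - a k.+1 x) ^+ 2 * m x).
Definition total_mass := \sum_(0 <= k < (81 * N).+1) mass k.

Lemma mass_ge0 k : 0 <= mass k.
Proof. by apply: sumr_ge0 => x _; exact: mulr_ge0 (sqr_ge0 _) (m_ge0 x). Qed.

Lemma local_mass_ge0 k : 0 <= local_mass k.
Proof.
by apply: sumr_ge0 => x _; exact: mulr_ge0 (mulr_ge0 (sqr_ge0 _) (sqr_ge0 _)) (m_ge0 x).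
Qed.

Lemma grad_energy_ge0 k : 0 <= grad_energy k.
Proof.
by apply: sumr_ge0 => x _; exact: mulr_ge0 (sqr_ge0 _) (mulr_ge0 (Gamma_ge0 _ _) (m_ge0 x)).
Qed.

Lemma dt_energy_ge0 k : 0 <= dt_energy k.
Proof.
by apply: sumr_ge0 => x _; exact: mulr_ge0 (sqr_ge0 _) (mulr_ge0 (sqr_ge0 _) (m_ge0 x)).
Qed.

Lemma local_mass_le_mass k : local_mass k <= mass k.
Proof.
apply: ler_sum => x _; rewrite -mulrA ler_piMl ?(mulr_ge0 (sqr_ge0 _) (m_ge0 x)) //.
by rewrite expr_le1 ?cutoff_ge0 ?cutoff_le1.
Qed.

Lemma sum_grad_energy_le K :
  \sum_(0 <= k < K.+1) grad_energy k
  <= mass K.+1 + 4 * (r ^- 2 * \sum_(0 <= k < K.+1) mass k).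
Proof.
apply: le_trans (@sum_telescope_le _ grad_energy local_mass
  (fun k => 4 * (r ^- 2 * mass k)) K.+1 _) _ => [k|]; last first.
  rewrite -!mulr_sumr.
  by have := local_mass_le_mass K.+1; have := local_mass_ge0 0; lra.
apply: le_trans (caccioppoli (@a_step k)) _.
suff -> : \sum_(x <- window) psi x ^+ 2 * (a k.+1 x ^+ 2 - a k x ^+ 2) * m x
          = local_mass k.+1 - local_mass k by [].
by rewrite /local_mass -sumrB; apply: eq_bigr => x _; ring.
Qed.

Lemma sum_dt_energy_le K :
  \sum_(0 <= k < K.+1) dt_energy k
  <= grad_energy K.+1 + 2 * (r ^- 2 * \sum_(0 <= k < K.+1) grad_energy k).
Proof.
apply: le_trans (@sum_telescope_le _ dt_energy (fun k => local_dirichlet (a k) / 2)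
  (fun k => 2 * (r ^- 2 * grad_energy k)) K.+1 _) _ => [k|]; last first.
  rewrite -!mulr_sumr.
  have := local_dirichlet_le (a K.+1); have := local_dirichlet_ge0 (a 0).
  by rewrite -/(grad_energy K.+1); lra.
by apply: le_trans (time_derivative_energy (@a_step k)) _; rewrite mulrBl.
Qed.

Lemma grad_energy_average M : (M + N <= 81 * N)%N ->
  r ^+ 2 * \sum_(0 <= k < M.+1) grad_energy k <= 5 * total_mass.
Proof.
move=> MN; have r2_gt0 : 0 < r ^+ 2 by exact: exprn_gt0.
have prefix n : (n <= (81 * N).+1)%N -> \sum_(0 <= k < n) mass k <= total_mass.
  by move=> n81; apply: ler_sum_prefix => //; exact: mass_ge0.
rewrite -N_eq; apply: le_trans (@prefix_sum_average _ grad_energy mass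
  (4 * (r ^- 2 * total_mass)) M N grad_energy_ge0 mass_ge0 _) _ => [K KMN|].
  apply: le_trans (sum_grad_energy_le K) _.
  rewrite lerD2l ler_wpM2l // ler_wpM2l ?prefix //.
    by rewrite invr_ge0 ltW.
  by rewrite ltnS (leq_trans _ MN) // ltnW.
have := prefix (M + N).+1 MN.
by rewrite N_eq mulrCA mulVKf ?lt0r_neq0 //; lra.
Qed.

Lemma dt_energy_average :
  r ^+ 2 * \sum_(0 <= k < N.+1) dt_energy k
  <= 3 * \sum_(0 <= k < (N + N).+1) grad_energy k.
Proof.
have r2_gt0 : 0 < r ^+ 2 by exact: exprn_gt0.
set S := \sum_(0 <= k < (N + N).+1) grad_energy k.
rewrite -N_eq; apply: le_trans (@prefix_sum_average _ dt_energy grad_energy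
  (2 * (r ^- 2 * S)) N N dt_energy_ge0 grad_energy_ge0 _) _ => [K KN|].
  apply: le_trans (sum_dt_energy_le K) _; rewrite lerD2l ler_wpM2l // ler_wpM2l //.
    by rewrite invr_ge0 ltW.
  by apply: ler_sum_prefix; [exact: grad_energy_ge0 | rewrite ltnS ltnW].
by rewrite -/S N_eq mulrCA mulVKf ?lt0r_neq0 //; lra.
Qed.

Lemma local_energy_le :
  r ^+ 2 * \sum_(k < N.+1) \sum_(x \in ball rho x0 r)
             Gamma m w (fun y => u y (- k%:Z)) x * m x
  + r ^+ 4 * \sum_(k < N.+1) \sum_(x \in ball rho x0 r) Dt u x (- k%:Z) ^+ 2 * m x
  <= 20 * \sum_(k < (81 * N).+1) \sum_(x \in ball rho x0 (9 * r)) u x (- k%:Z) ^+ 2 * m x.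
Proof.
have r2_ge0 : 0 <= r ^+ 2 by rewrite exprn_ge0 // ltW.
have grad_ball : \sum_(k < N.+1) \sum_(x \in ball rho x0 r) Gamma m w (a k) x * m x
    <= \sum_(0 <= k < N.+1) grad_energy k.
  rewrite big_mkord; apply: ler_sum => k _; apply: ball_sum_le_window => x.
  - by move=> xr; rewrite /psi cutoff_eq1 ?expr1n //; have := r_gt0; lra.
  - exact: sqr_ge0.
  - exact: mulr_ge0 (Gamma_ge0 _ _) (m_ge0 x).
have dt_ball : \sum_(k < N.+1) \sum_(x \in ball rho x0 r) Dt u x (- k%:Z) ^+ 2 * m x
    <= \sum_(0 <= k < N.+1) dt_energy k.
  rewrite big_mkord; apply: ler_sum => k _.
  have -> : \sum_(x \in ball rho x0 r) Dt u x (- k%:Z) ^+ 2 * m x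
      = \sum_(x \in ball rho x0 r) (a k x - a k.+1 x) ^+ 2 * m x.
    by apply: eq_fsbigr => x _; rewrite Dt_a.
  apply: ball_sum_le_window => x.
  - by move=> xr; rewrite /phi cutoff_eq1 ?expr1n //; have := r_gt0; lra.
  - exact: sqr_ge0.
  - exact: mulr_ge0 (sqr_ge0 _) (m_ge0 x).
have -> : \sum_(k < (81 * N).+1) \sum_(x \in ball rho x0 (9 * r)) a k x ^+ 2 * m x
          = total_mass.
  by rewrite /total_mass big_mkord; apply: eq_bigr => k _; rewrite fsbig_finite.
have NN : (N + N <= 81 * N)%N by lia.
have NNN : (N + N + N <= 81 * N)%N by lia.
have dt_grad : r ^+ 4 * \sum_(0 <= k < N.+1) dt_energy k
    <= 3 * (r ^+ 2 * \sum_(0 <= k < (N + N).+1) grad_energy k).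
  by rewrite -[4%N]/(2 + 2)%N exprD -mulrA [leRHS]mulrCA ler_wpM2l ?dt_energy_average.
have := grad_energy_average NN; have := grad_energy_average NNN.
have := ler_wpM2l r2_ge0 grad_ball; have := ler_wpM2l (exprn_ge0 4 (ltW r_gt0)) dt_ball.
lra.
Qed.

End Ancient.

End Energy.

Theorem theorem4p1 (R : realType) :
  exists C : R,
  forall (V : choiceType) (m : V -> R) (w : V -> V -> R) (rho : V -> V -> R)
         (x0 : V) (u : V -> int -> R) (r : nat),
    weighted_graph m w ->
    pseudometric rho ->
    intrinsic m w rho ->
    (forall (x : V) (s : R), finite_set (ball rho x s)) ->
    has_ubound (jumps w rho) ->
    ancient m w u ->
    jump_size w rho <= r%:R ->
    (r%:R ^+ 2 * sumQ m rho x0 r (fun x t => Gamma m w (fun y => u y t) x)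
     + r%:R ^+ 4 * sumQ m rho x0 r (fun x t => Dt u x t ^+ 2)
     <= C * sumQ m rho x0 (9 * r) (fun x t => u x t ^+ 2)).
Proof.
exists 20 => V m w rho x0 u r graph_mw pseudometric_rho intrinsic_rho finite_ball
  jumps_ub ancient_u jump_size_le.
have [-> | r_gt0] := posnP r.
  rewrite !expr0n /= !mul0r add0r mulr_ge0 //.
  apply: sumr_ge0 => k _; apply: fsumr_ge0 => x _; rewrite mulr_ge0 ?sqr_ge0 //.
  by case: graph_mw => _ [_ [_ [_ [m_gt0 _]]]]; exact: ltW.
rewrite /sumQ natrM expnMn.
apply: (local_energy_le x0 graph_mw pseudometric_rho intrinsic_rho finite_ball jumps_ub
  _ jump_size_le ancient_u (natrX _ _ _)).
by rewrite ltr0n.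
Qed.
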